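(* Let $p\geqslant 5$ be a prime and \[ \varpi_p = \psi\left( \frac{1}{p} \right) + 2p-1 + \gamma + p\left( \log p - \sum_{j=1}^{p} \frac{1}{j} \right). \] Then $(p-1)(1-\gamma)-\log 2-1< \varpi_p < (p-1)(1-\gamma)$.
   Context: $\psi=\Gamma'/\Gamma$ is the digamma function and $\gamma$ the Euler–Mascheroni constant. *)

From Stdlib Require Import Reals ZArith Znumtheory.
From Coquelicot Require Import Coquelicot.
Open Scope R_scope.

Definition harmonic (n : nat) : R := sum_n_m (fun j => / INR j) 1 n.

Definition euler_gamma : R :=
  real (Lim_seq (fun n => harmonic n - ln (INR n))).

Definition Gamma (x : R) : R :=
  RInt_gen (fun t => Rpower t (x - 1) * exp (- t))
           (at_right 0) (Rbar_locally p_infty).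

Definition digamma (x : R) : R := Derive Gamma x / Gamma x.

Definition varpi (p : nat) : R :=
  digamma (/ INR p) + 2 * INR p - 1 + euler_gamma
  + INR p * (ln (INR p) - harmonic p).

(* Put x = 1/p.  Then varpi_p = (psi(x) + 1/x) + (p - 1) + gamma - p (H_p - log p).  Since
   H_n - log n decreases and H_n - log n - 1/(2n) increases, both towards gamma, we have
   0 <= p (H_p - log p - gamma) <= 1/2; with log 2 > 1/2 both inequalities then follow from
   -1 <= psi(x) + 1/x < 0.
   As Gamma(x) = Gamma(x+1)/x, psi(x) + 1/x = (x^2 Gamma'(x) + Gamma(x+1)) / (x Gamma(x+1)), whose
   numerator is x Gamma'(x+1).  Rather than differentiating under the integral sign, we squeeze the
   increments Gamma(x+h+1) - Gamma(x+1) = int t^x (t^h - 1) e^-t dt with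
   h ln t <= t^x (t^h - 1) <= h t^(1/4) ln t, which bounds the difference quotients between -29/36
   and -1/50; together with Gamma(x+1) >= 29/36 this gives the claim for 0 < x <= 1/5. *)

From Stdlib Require Import Reals ZArith Znumtheory Lra Lia Classical.
From Coquelicot Require Import Coquelicot.
Open Scope R_scope.

Lemma exp_le (x y : R) : x <= y -> exp x <= exp y.
Proof. intros [Hlt | ->]; [left; apply exp_increasing; exact Hlt | right; reflexivity]. Qed.

Lemma exp_sub_1_le (u : R) : exp u - 1 <= u * exp u.
Proof.
  pose proof (exp_ineq1_le (- u)) as H. rewrite exp_Ropp in H.
  pose proof (exp_pos u) as Hu.
  apply (Rmult_le_compat_r (exp u)) in H; [|lra].
  rewrite Rinv_l in H by lra. lra.
Qed.

Lemma exp_neg_le_1 (t : R) : 0 <= t -> exp (- t) <= 1.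
Proof. intros Ht. rewrite <- exp_0. apply exp_le. lra. Qed.

Lemma exp_neg_le_inv (b : R) : 0 < b -> exp (- b) <= / b.
Proof.
  intros Hb. rewrite exp_Ropp. apply Rinv_le_contravar; [exact Hb|].
  pose proof (exp_ineq1_le b). lra.
Qed.

Lemma inv_exp_1_le : / exp 1 <= 3 / 8.
Proof.
  assert (He : 8 / 3 <= exp 1).
  { apply Rle_trans with (2 := exp_ge_taylor 1 3 ltac:(lra)). simpl. lra. }
  replace (3 / 8) with (/ (8 / 3)) by field. apply Rinv_le_contravar; lra.
Qed.

Lemma ln_nonpos (t : R) : 0 < t <= 1 -> ln t <= 0.
Proof. intros Ht. rewrite <- ln_1. apply ln_le; lra. Qed.

Lemma ln_nonneg (t : R) : 1 <= t -> 0 <= ln t.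
Proof. intros Ht. rewrite <- ln_1. apply ln_le; lra. Qed.

Lemma ln_le_sub_1 (y : R) : 0 < y -> ln y <= y - 1.
Proof. intros Hy. pose proof (exp_ineq1_le (ln y)). rewrite exp_ln in * by exact Hy. lra. Qed.

Lemma ln_ge_1_sub_inv (y : R) : 0 < y -> 1 - / y <= ln y.
Proof.
  intros Hy. pose proof (ln_le_sub_1 (/ y) ltac:(apply Rinv_0_lt_compat; exact Hy)).
  rewrite ln_Rinv in * by exact Hy. lra.
Qed.

Lemma Rpower_pos (t c : R) : 0 < Rpower t c.
Proof. apply exp_pos. Qed.

Lemma Rpower_1_l (c : R) : Rpower 1 c = 1.
Proof. unfold Rpower. rewrite ln_1, Rmult_0_r. apply exp_0. Qed.

Lemma Rpower_ge_1 (t c : R) : 1 <= t -> 0 <= c -> 1 <= Rpower t c.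
Proof.
  intros Ht Hc. unfold Rpower. rewrite <- exp_0 at 1. apply exp_le.
  pose proof (ln_nonneg t Ht). nra.
Qed.

Lemma Rpower_le_1 (t c : R) : 0 < t <= 1 -> 0 <= c -> Rpower t c <= 1.
Proof.
  intros Ht Hc. unfold Rpower. rewrite <- exp_0. apply exp_le.
  pose proof (ln_nonpos t Ht). nra.
Qed.

Lemma Rpower_sub_1_ge (t h : R) : h * ln t <= Rpower t h - 1.
Proof. pose proof (exp_ineq1_le (h * ln t)). unfold Rpower. lra. Qed.

Lemma Rpower_sub_1_le (t h : R) : Rpower t h - 1 <= h * ln t * Rpower t h.
Proof. apply exp_sub_1_le. Qed.

Lemma Rpower_mul_ln_le (t a b : R) : a <= b -> Rpower t a * ln t <= Rpower t b * ln t.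
Proof.
  intros Hab. unfold Rpower.
  destruct (Rle_or_lt 0 (ln t)) as [Hl | Hl].
  - apply Rmult_le_compat_r; [exact Hl|]. apply exp_le. nra.
  - assert (exp (b * ln t) <= exp (a * ln t)) by (apply exp_le; nra). nra.
Qed.

Lemma Rpower_le_exp_half (t c : R) : 0 < t -> 0 < c ->
  Rpower t c <= Rpower (2 * c) c * exp (t / 2).
Proof.
  intros Ht Hc. unfold Rpower. rewrite <- exp_plus. apply exp_le.
  assert (Hsplit : ln t = ln (2 * c) + ln (t / (2 * c))) by (rewrite ln_div by lra; ring).
  pose proof (ln_le_sub_1 (t / (2 * c)) ltac:(apply Rdiv_lt_0_compat; lra)).
  replace (t / 2) with (c * (t / (2 * c))) by (field; lra).
  rewrite Hsplit. nra.
Qed.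

Lemma Rpower_lt_of_lt_root (a y eps : R) : 0 < y -> 0 < eps ->
  0 < a < Rpower eps (/ y) -> Rpower a y < eps.
Proof.
  intros Hy Heps Ha.
  apply Rlt_le_trans with (Rpower (Rpower eps (/ y)) y); [apply Rlt_Rpower_l; assumption|].
  rewrite Rpower_mult, Rinv_l, Rpower_1 by lra. lra.
Qed.

Lemma Rpower_quarter_ln_le (t : R) : 1 <= t -> Rpower t (1 / 4) * ln t <= t - 1.
Proof.
  intros Ht. set (r := Rpower t (1 / 4)).
  assert (Hr4 : r ^ 4 = t).
  { unfold r. rewrite <- Rpower_pow by apply Rpower_pos.
    rewrite Rpower_mult. replace (1 / 4 * INR 4) with 1 by (simpl; field).
    apply Rpower_1. lra. }
  assert (Hln : ln t = 4 * ln r) by (unfold r; rewrite ln_Rpower; field).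
  assert (Hr1 : 1 <= r) by (apply Rpower_ge_1; lra).
  pose proof (ln_le_sub_1 r ltac:(lra)).
  (* [4 r (r - 1) <= r^4 - 1] because [r^4 - 1 - 4 r (r - 1) = (r - 1)^2 (r^2 + 2 r - 1)] *)
  assert (H4 : 4 * r * (r - 1) <= r ^ 4 - 1).
  { assert (0 <= (r - 1) ^ 2 * (r ^ 2 + 2 * r - 1)) by (apply Rmult_le_pos; nra). nra. }
  rewrite Hln. nra.
Qed.

Lemma Rpower_quarter_neg_ln_le (a : R) : 0 < a -> Rpower a (1 / 4) * - ln a <= 4.
Proof.
  intros Ha. set (v := - ln a / 4).
  replace (Rpower a (1 / 4)) with (exp (- v)) by (unfold v, Rpower; f_equal; field).
  replace (- ln a) with (4 * v) by (unfold v; field).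
  rewrite exp_Ropp. pose proof (exp_pos v). pose proof (exp_ineq1_le v).
  assert (v * / exp v <= 1); [|nra].
  apply (Rmult_le_reg_r (exp v)); [lra|]. rewrite Rmult_assoc, Rinv_l by lra. lra.
Qed.

Lemma RInt_antiderivative (F f : R -> R) (a b : R) : a <= b ->
  (forall t, a <= t <= b -> is_derive F t (f t)) ->
  (forall t, a <= t <= b -> continuous f t) ->
  RInt f a b = F b - F a :> R.
Proof.
  intros Hab HF Hf. apply is_RInt_unique.
  apply (@is_RInt_derive R_CompleteNormedModule); intros t Ht;
    rewrite Rmin_left, Rmax_right in Ht by exact Hab; auto.
Qed.

Lemma le_of_derive_nonneg (F f : R -> R) (a b : R) : a <= b ->
  (forall t, a <= t <= b -> is_derive F t (f t)) ->
  (forall t, a <= t <= b -> continuous f t) ->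
  (forall t, a < t < b -> 0 <= f t) -> F a <= F b.
Proof.
  intros Hab HF Hf Hpos.
  assert (0 <= RInt f a b).
  { apply RInt_ge_0; [exact Hab| |exact Hpos].
    apply (@ex_RInt_continuous R_CompleteNormedModule); intros t Ht.
    rewrite Rmin_left, Rmax_right in Ht by exact Hab; auto. }
  rewrite (RInt_antiderivative F f) in H by assumption. lra.
Qed.

Ltac continuity_by_derive :=
  apply (@ex_derive_continuous R_AbsRing R_NormedModule); auto_derive; try lra.

Lemma ln_le_half_sub_inv (y : R) : 1 <= y -> ln y <= (y - / y) / 2.
Proof.
  intros Hy.
  assert (H : (1 - / 1) / 2 - ln 1 <= (y - / y) / 2 - ln y).
  { apply (le_of_derive_nonneg (fun t => (t - / t) / 2 - ln t)
                                (fun t => (t - 1) ^ 2 / (2 * t ^ 2))); [exact Hy | | |].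
    - intros t Ht. auto_derive; [lra|]. field. lra.
    - intros t Ht. continuity_by_derive. nra.
    - intros t Ht. apply Rdiv_le_0_compat; [nra|]. nra. }
  rewrite ln_1, Rinv_1 in H. lra.
Qed.

Lemma exp_neg_le_quadratic (t : R) : 0 <= t -> exp (- t) <= 1 - t + t ^ 2 / 2.
Proof.
  intros Ht.
  assert (H : 1 - 0 + 0 ^ 2 / 2 - exp (- 0) <= 1 - t + t ^ 2 / 2 - exp (- t)).
  { apply (le_of_derive_nonneg (fun s => 1 - s + s ^ 2 / 2 - exp (- s))
                                (fun s => exp (- s) - 1 + s)); [exact Ht | | |].
    - intros s Hs. auto_derive; [exact I|]. field.
    - intros s Hs. continuity_by_derive.
    - intros s Hs. pose proof (exp_ineq1_le (- s)). lra. }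
  rewrite Ropp_0, exp_0 in H. lra.
Qed.

Lemma ex_RInt_pos (f : R -> R) (a b : R) :
  (forall t, 0 < t -> continuous f t) -> 0 < a -> 0 < b -> ex_RInt f a b.
Proof.
  intros Hf Ha Hb. apply (@ex_RInt_continuous R_CompleteNormedModule).
  intros t [Ht _]. apply Hf. pose proof (Rmin_glb_lt a b 0 Ha Hb). lra.
Qed.

Lemma RInt_Chasles_pos (f : R -> R) (a b c : R) :
  (forall t, 0 < t -> continuous f t) -> 0 < a -> 0 < b -> 0 < c ->
  RInt f a c = RInt f a b + RInt f b c.
Proof.
  intros Hf Ha Hb Hc. symmetry.
  apply (@RInt_Chasles R_CompleteNormedModule); apply ex_RInt_pos; assumption.
Qed.

Lemma RInt_le_wider (f : R -> R) (a b a' b' : R) :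
  (forall t, 0 < t -> continuous f t) -> (forall t, 0 < t -> 0 <= f t) ->
  0 < a' <= a -> a <= b <= b' -> RInt f a b <= RInt f a' b'.
Proof.
  intros Hc Hpos Ha Hb.
  rewrite (RInt_Chasles_pos f a' a b'), (RInt_Chasles_pos f a b b') by (auto; lra).
  assert (0 <= RInt f a' a).
  { apply RInt_ge_0; [lra | apply ex_RInt_pos; auto; lra | intros; apply Hpos; lra]. }
  assert (0 <= RInt f b b').
  { apply RInt_ge_0; [lra | apply ex_RInt_pos; auto; lra | intros; apply Hpos; lra]. }
  lra.
Qed.

Lemma RInt_scal_R (f : R -> R) (c a b : R) : ex_RInt f a b ->
  RInt (fun t => c * f t) a b = c * RInt f a b :> R.
Proof. exact (RInt_scal f a b c). Qed.

Lemma real_Lim_seq_between (u : nat -> R) (L U : R) :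
  eventually (fun n => L <= u n <= U) -> L <= real (Lim_seq u) <= U.
Proof.
  intros Hu.
  pose proof (Lim_seq_le_loc (fun _ => L) u (filter_imp _ _ (fun n Hn => proj1 Hn) Hu)) as HL.
  pose proof (Lim_seq_le_loc u (fun _ => U) (filter_imp _ _ (fun n Hn => proj2 Hn) Hu)) as HU.
  rewrite Lim_seq_const in HL, HU.
  destruct (Lim_seq u); simpl in *; tauto.
Qed.

(* [Derive f x] is the limit of the difference quotients along [h = 1/(n+1)], so bounds on
   these quotients bound it without any differentiability proof. *)
Lemma Derive_between (f : R -> R) (x d L U : R) : 0 < d ->
  (forall h, 0 < h < d -> L <= (f (x + h) - f x) / h <= U) -> L <= Derive f x <= U.
Proof.
  intros Hd Hq. unfold Derive, Lim. apply real_Lim_seq_between.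
  assert (Hnear : Rbar_locally' (Finite 0) (fun h => 0 < h -> L <= (f (x + h) - f x) / h <= U)).
  { exists (mkposreal d Hd). intros h Hh _ Hpos. apply Hq. split; [exact Hpos|].
    change (Rabs (h - 0) < d) in Hh. rewrite Rminus_0_r, Rabs_pos_eq in Hh; lra. }
  assert (Hev : eventually (fun n => 0 < Rbar_loc_seq 0 n ->
                 L <= (f (x + Rbar_loc_seq 0 n) - f x) / Rbar_loc_seq 0 n <= U))
    by exact (filterlim_Rbar_loc_seq 0 _ Hnear).
  revert Hev. apply filter_imp. intros n Hn. apply Hn. simpl. pose proof (pos_INR n).
  rewrite Rplus_0_l. apply Rinv_0_lt_compat. lra.
Qed.

(** * Improper integrals over (0, +oo) *)

Lemma eventually_near_0_pinfty (P : R * R -> Prop) (d B : R) : 0 < d ->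
  (forall a b, 0 < a < d -> B < b -> P (a, b)) ->
  filter_prod (at_right 0) (Rbar_locally p_infty) P.
Proof.
  intros Hd HP.
  apply (Filter_prod _ _ _ (fun a => 0 < a < d) (fun b => B < b)).
  - exists (mkposreal d Hd). intros a Ha Hpos. change (Rabs (a - 0) < d) in Ha.
    rewrite Rminus_0_r, Rabs_pos_eq in Ha; simpl; lra.
  - exists B. auto.
  - intros a b Ha Hb. apply HP; assumption.
Qed.

Section ImproperBounds.

Context {Fa Fb : (R -> Prop) -> Prop} {FFa : ProperFilter Fa} {FFb : ProperFilter Fb}.

Lemma is_RInt_gen_le_eventually (f : R -> R) (l M : R) : is_RInt_gen f Fa Fb l ->
  filter_prod Fa Fb (fun ab => RInt f (fst ab) (snd ab) <= M) -> l <= M.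
Proof.
  intros Hl HM. apply Rnot_lt_le. intros HMl.
  assert (Hnear := proj1 (filterlimi_locally _ l) Hl (mkposreal _ (proj2 (Rlt_0_minus M l) HMl))).
  destruct (filter_ex _ (filter_and _ _ Hnear HM)) as [[a b] [[z [Hz Hball]] Hab]].
  simpl in *. rewrite (is_RInt_unique _ _ _ _ Hz) in Hab.
  change (Rabs (z - l) < l - M) in Hball. apply Rabs_def2 in Hball. lra.
Qed.

Lemma is_RInt_gen_ge_eventually (f : R -> R) (l M : R) : is_RInt_gen f Fa Fb l ->
  filter_prod Fa Fb (fun ab => M <= RInt f (fst ab) (snd ab)) -> M <= l.
Proof.
  intros Hl HM. apply Rnot_lt_le. intros HlM.
  assert (Hnear := proj1 (filterlimi_locally _ l) Hl (mkposreal _ (proj2 (Rlt_0_minus l M) HlM))).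
  destruct (filter_ex _ (filter_and _ _ Hnear HM)) as [[a b] [[z [Hz Hball]] Hab]].
  simpl in *. rewrite (is_RInt_unique _ _ _ _ Hz) in Hab.
  change (Rabs (z - l) < M - l) in Hball. apply Rabs_def2 in Hball. lra.
Qed.

End ImproperBounds.

Lemma ex_RInt_gen_nonneg_bounded (f : R -> R) (M : R) :
  (forall t, 0 < t -> continuous f t) -> (forall t, 0 < t -> 0 <= f t) ->
  (forall a b, 0 < a -> a <= b -> RInt f a b <= M) ->
  ex_RInt_gen f (at_right 0) (Rbar_locally p_infty).
Proof.
  intros Hc Hpos HM.
  set (E := fun r => exists a b, 0 < a <= b /\ r = RInt f a b).
  destruct (completeness E) as [S [HS_ub HS_least]].
  { exists M. intros r (a & b & Hab & ->). apply HM; lra. }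
  { exists (RInt f 1 1), 1, 1. split; [lra | reflexivity]. }
  exists S. apply filterlimi_locally. intros eps.
  assert (Happrox : exists a0 b0, 0 < a0 <= b0 /\ S - eps < RInt f a0 b0).
  { apply NNPP. intros Hnone.
    assert (S <= S - eps); [|pose proof (cond_pos eps); lra].
    apply HS_least. intros r (a & b & Hab & ->).
    apply Rnot_lt_le. intros Hlt. apply Hnone. exists a, b. split; assumption. }
  destruct Happrox as (a0 & b0 & Hab0 & Hlt).
  apply (eventually_near_0_pinfty _ a0 b0); [lra|]. intros a b Ha Hb.
  exists (RInt f a b). split.
  - apply (@RInt_correct R_CompleteNormedModule), ex_RInt_pos; auto; lra.
  - assert (RInt f a b <= S) by (apply HS_ub; exists a, b; split; [lra | reflexivity]).
    assert (RInt f a0 b0 <= RInt f a b) by (apply RInt_le_wider; auto; lra).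
    change (Rabs (RInt f a b - S) < eps). rewrite Rabs_left1; lra.
Qed.

(** * The Gamma function *)

Definition Gamma_integrand (y t : R) : R := Rpower t (y - 1) * exp (- t).

Lemma Gamma_integrand_continuous (y t : R) : 0 < t -> continuous (Gamma_integrand y) t.
Proof. intros Ht. unfold Gamma_integrand, Rpower. continuity_by_derive. Qed.

Lemma Gamma_integrand_ge0 (y t : R) : 0 <= Gamma_integrand y t.
Proof.
  unfold Gamma_integrand. pose proof (Rpower_pos t (y - 1)). pose proof (exp_pos (- t)). nra.
Qed.

Lemma Gamma_integrand_succ (y t : R) : Gamma_integrand (y + 1) t = Rpower t y * exp (- t).
Proof. unfold Gamma_integrand. do 2 f_equal. ring. Qed.

Lemma Gamma_integrand_le_exp_half (y t : R) : 0 < y -> 1 <= t ->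
  Gamma_integrand y t <= Rpower (2 * y) y * exp (- t / 2).
Proof.
  intros Hy Ht. unfold Gamma_integrand.
  assert (Hpow : Rpower t (y - 1) <= Rpower (2 * y) y * exp (t / 2)).
  { apply Rle_trans with (Rpower t y); [apply Rle_Rpower; lra|].
    apply Rpower_le_exp_half; lra. }
  replace (exp (- t / 2)) with (exp (t / 2) * exp (- t))
    by (rewrite <- exp_plus; f_equal; field).
  pose proof (exp_pos (- t)). nra.
Qed.

Lemma Gamma_integrand_le_inv (y t : R) : 0 < y -> 1 <= t ->
  Gamma_integrand y t <= 2 * Rpower (2 * y) y / t.
Proof.
  intros Hy Ht. pose proof (Gamma_integrand_le_exp_half y t Hy Ht).
  pose proof (exp_neg_le_inv (t / 2) ltac:(lra)). pose proof (Rpower_pos (2 * y) y).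
  replace (- (t / 2)) with (- t / 2) in * by field.
  replace (2 * Rpower (2 * y) y / t) with (Rpower (2 * y) y * / (t / 2)) by (field; lra).
  nra.
Qed.

Lemma Gamma_integrand_succ_le_near_0 (y a eps : R) : 0 < y -> 0 < eps ->
  0 < a < Rpower eps (/ y) -> Gamma_integrand (y + 1) a <= eps.
Proof.
  intros Hy Heps Ha. rewrite Gamma_integrand_succ.
  pose proof (Rpower_lt_of_lt_root a y eps Hy Heps Ha).
  pose proof (Rpower_pos a y). pose proof (exp_neg_le_1 a ltac:(lra)). nra.
Qed.

Lemma RInt_Gamma_integrand_head_le (y a : R) : 0 < y -> 0 < a <= 1 ->
  RInt (Gamma_integrand y) a 1 <= / y.
Proof.
  intros Hy Ha.
  apply Rle_trans with (RInt (fun t => Rpower t (y - 1)) a 1).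
  { apply RInt_le; [lra | apply ex_RInt_pos; [apply Gamma_integrand_continuous | lra..] | |].
    - apply ex_RInt_pos; [|lra..]. intros t Ht. unfold Rpower. continuity_by_derive.
    - intros t Ht. unfold Gamma_integrand.
      pose proof (Rpower_pos t (y - 1)). pose proof (exp_neg_le_1 t ltac:(lra)). nra. }
  rewrite (RInt_antiderivative (fun t => Rpower t y / y)); [| lra | |].
  - rewrite Rpower_1_l. pose proof (Rpower_pos a y).
    assert (0 < Rpower a y / y) by (apply Rdiv_lt_0_compat; lra).
    unfold Rdiv in *. lra.
  - intros t Ht. unfold Rpower. auto_derive; [lra|].
    replace ((y - 1) * ln t) with (y * ln t + - ln t) by ring.
    rewrite exp_plus, (exp_Ropp (ln t)), exp_ln by lra. field. lra.
  - intros t Ht. unfold Rpower. continuity_by_derive.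
Qed.

Lemma RInt_Gamma_integrand_tail_le (y b : R) : 0 < y -> 1 <= b ->
  RInt (Gamma_integrand y) 1 b <= 2 * Rpower (2 * y) y.
Proof.
  intros Hy Hb. set (K := Rpower (2 * y) y).
  assert (HK : 0 < K) by apply Rpower_pos.
  apply Rle_trans with (RInt (fun t => K * exp (- t / 2)) 1 b).
  { apply RInt_le; [lra | apply ex_RInt_pos; [apply Gamma_integrand_continuous | lra..] | |].
    - apply ex_RInt_pos; [|lra..]. intros t Ht. continuity_by_derive.
    - intros t Ht. apply Gamma_integrand_le_exp_half; lra. }
  rewrite (RInt_antiderivative (fun t => - 2 * K * exp (- t / 2))); [| lra | |].
  - pose proof (exp_pos (- b / 2)). pose proof (exp_neg_le_1 (1 / 2) ltac:(lra)).
    replace (- (1) / 2) with (- (1 / 2)) by field. nra.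
  - intros t Ht. auto_derive; [exact I|]. unfold Rdiv. field.
  - intros t Ht. continuity_by_derive.
Qed.

Lemma RInt_Gamma_integrand_le (y a b : R) : 0 < y -> 0 < a -> a <= b ->
  RInt (Gamma_integrand y) a b <= / y + 2 * Rpower (2 * y) y.
Proof.
  intros Hy Ha Hab.
  pose proof (Rmin_l a 1). pose proof (Rmin_r a 1). pose proof (Rmin_pos a 1 Ha Rlt_0_1).
  pose proof (Rmax_l b 1). pose proof (Rmax_r b 1).
  apply Rle_trans with (RInt (Gamma_integrand y) (Rmin a 1) (Rmax b 1)).
  { apply RInt_le_wider;
      [apply Gamma_integrand_continuous | intros; apply Gamma_integrand_ge0 | lra | lra]. }
  rewrite (RInt_Chasles_pos _ (Rmin a 1) 1 (Rmax b 1))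
    by (try apply Gamma_integrand_continuous; lra).
  pose proof (RInt_Gamma_integrand_head_le y (Rmin a 1) Hy ltac:(lra)).
  pose proof (RInt_Gamma_integrand_tail_le y (Rmax b 1) Hy ltac:(lra)).
  lra.
Qed.

Lemma is_RInt_gen_Gamma (y : R) : 0 < y ->
  is_RInt_gen (Gamma_integrand y) (at_right 0) (Rbar_locally p_infty) (Gamma y).
Proof.
  intros Hy. apply (@RInt_gen_correct R_CompleteNormedModule);
    [apply Proper_StrongProper, at_right_proper_filter
    | apply Proper_StrongProper, Rbar_locally_filter |].
  apply (ex_RInt_gen_nonneg_bounded _ (/ y + 2 * Rpower (2 * y) y)).
  - apply Gamma_integrand_continuous.
  - intros t _. apply Gamma_integrand_ge0.
  - intros a b Ha Hab. apply RInt_Gamma_integrand_le; assumption.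
Qed.

Lemma Gamma_ge_0 (y : R) : 0 < y -> 0 <= Gamma y.
Proof.
  intros Hy. pose proof (is_RInt_gen_Gamma y Hy) as HGamma.
  apply (is_RInt_gen_ge_eventually _ _ _ HGamma).
  apply (eventually_near_0_pinfty _ 1 1); [lra|]. intros a b Ha Hb. simpl.
  apply RInt_ge_0; [lra | apply ex_RInt_pos; [apply Gamma_integrand_continuous | lra..] |].
  intros t _. apply Gamma_integrand_ge0.
Qed.

Lemma RInt_Gamma_integrand_by_parts (y a b : R) : 0 < y -> 0 < a -> a <= b ->
  RInt (fun t => Gamma_integrand (y + 1) t - y * Gamma_integrand y t) a b
  = Gamma_integrand (y + 1) a - Gamma_integrand (y + 1) b :> R.
Proof.
  intros Hy Ha Hab.
  rewrite (RInt_antiderivative (fun t => - Gamma_integrand (y + 1) t)); [ring | lra | |].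
  - intros t Ht. unfold Gamma_integrand, Rpower. auto_derive; [lra|].
    replace (y + 1 - 1) with y by ring.
    replace ((y - 1) * ln t) with (y * ln t + - ln t) by ring.
    rewrite exp_plus, (exp_Ropp (ln t)), exp_ln by lra. field. lra.
  - intros t Ht. unfold Gamma_integrand, Rpower. continuity_by_derive.
Qed.

Lemma Gamma_succ (y : R) : 0 < y -> Gamma (y + 1) = y * Gamma y.
Proof.
  intros Hy.
  set (g := fun t => Gamma_integrand (y + 1) t - y * Gamma_integrand y t).
  assert (Hg : is_RInt_gen g (at_right 0) (Rbar_locally p_infty) (Gamma (y + 1) - y * Gamma y)).
  { exact (is_RInt_gen_minus (Fa := at_right 0) (Fb := Rbar_locally p_infty) _ _ _ _
             (is_RInt_gen_Gamma (y + 1) ltac:(lra))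
             (is_RInt_gen_scal _ y _ (is_RInt_gen_Gamma y Hy))). }
  set (K := Rpower (2 * (y + 1)) (y + 1)).
  (* the boundary terms [t^y e^-t] of the integration by parts vanish at 0 and at +oo *)
  assert (Hsmall : forall eps, 0 < eps -> filter_prod (at_right 0) (Rbar_locally p_infty)
            (fun ab => - eps <= RInt g (fst ab) (snd ab) <= eps)).
  { intros eps Heps.
    apply (eventually_near_0_pinfty _ (Rmin 1 (Rpower eps (/ y))) (Rmax 1 (2 * K / eps)));
      [apply Rmin_pos; [lra | apply Rpower_pos]|].
    intros a b Ha Hb. simpl.
    pose proof (Rmin_l 1 (Rpower eps (/ y))). pose proof (Rmin_r 1 (Rpower eps (/ y))).
    pose proof (Rmax_l 1 (2 * K / eps)). pose proof (Rmax_r 1 (2 * K / eps)).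
    unfold g. rewrite RInt_Gamma_integrand_by_parts by lra.
    pose proof (Gamma_integrand_succ_le_near_0 y a eps Hy Heps ltac:(lra)).
    assert (Gamma_integrand (y + 1) b <= eps).
    { apply Rle_trans with (1 := Gamma_integrand_le_inv (y + 1) b ltac:(lra) ltac:(lra)).
      fold K. apply Rle_div_l; [lra|].
      assert (eps * (2 * K / eps) = 2 * K) by (field; lra). nra. }
    pose proof (Gamma_integrand_ge0 (y + 1) a). pose proof (Gamma_integrand_ge0 (y + 1) b).
    lra. }
  apply Rminus_diag_uniq, Rle_antisym; apply Rle_plus_epsilon; intros eps Heps.
  - rewrite Rplus_0_l. apply (is_RInt_gen_le_eventually g _ _ Hg).
    apply (filter_imp _ _ (fun ab Hab => proj2 Hab) (Hsmall eps Heps)).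
  - enough (- eps <= Gamma (y + 1) - y * Gamma y) by lra.
    apply (is_RInt_gen_ge_eventually g _ _ Hg).
    apply (filter_imp _ _ (fun ab Hab => proj1 Hab) (Hsmall eps Heps)).
Qed.

Lemma Gamma_1_ge : 49 / 50 <= Gamma 1.
Proof.
  pose proof (is_RInt_gen_Gamma 1 ltac:(lra)) as HGamma1.
  apply (is_RInt_gen_ge_eventually _ _ _ HGamma1).
  apply (eventually_near_0_pinfty _ (1 / 100) 100); [lra|]. intros a b Ha Hb. simpl.
  rewrite (RInt_antiderivative (fun t => - exp (- t))); [| lra | |].
  - pose proof (exp_ineq1_le (- a)). pose proof (exp_neg_le_inv b ltac:(lra)).
    assert (/ b <= / 100) by (apply Rinv_le_contravar; lra). lra.
  - intros t Ht. unfold Gamma_integrand, Rpower. auto_derive; [exact I|].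
    rewrite Rminus_diag, Rmult_0_l, exp_0. ring.
  - intros t Ht. apply Gamma_integrand_continuous. lra.
Qed.

(** * Increments of Gamma near 1 and the digamma function near 0 *)

Lemma RInt_ln_exp_ge (a b : R) : 0 < a < 1 -> 1 < b ->
  - (29 / 36) <= RInt (fun t => ln t * exp (- t)) a b.
Proof.
  intros Ha Hb.
  set (f := fun t => ln t * exp (- t)).
  assert (Hc : forall t, 0 < t -> continuous f t) by (intros t Ht; unfold f; continuity_by_derive).
  rewrite (RInt_Chasles_pos f a 1 b) by (auto; lra).
  assert (Htail : 0 <= RInt f 1 b).
  { apply RInt_ge_0; [lra | apply ex_RInt_pos; auto; lra |].
    intros t Ht. unfold f. pose proof (ln_nonneg t ltac:(lra)). pose proof (exp_pos (- t)). nra. }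
  assert (Hhead : RInt (fun t => ln t * (1 - t + t ^ 2 / 2)) a 1 <= RInt f a 1).
  { apply RInt_le; [lra | | apply ex_RInt_pos; auto; lra |].
    - apply ex_RInt_pos; [|lra..]. intros t Ht. continuity_by_derive.
    - intros t Ht. unfold f. pose proof (ln_nonpos t ltac:(lra)).
      pose proof (exp_neg_le_quadratic t ltac:(lra)). nra. }
  (* [-29/36 = int_0^1 ln t (1 - t + t^2/2) dt]; the boundary term at [a] is nonnegative. *)
  rewrite (RInt_antiderivative (fun t => t * ln t - t - t ^ 2 * ln t / 2 + t ^ 2 / 4
                                       + t ^ 3 * ln t / 6 - t ^ 3 / 18)) in Hhead;
    [| lra | intros t Ht; auto_derive; [lra | field; lra] | intros t Ht; continuity_by_derive].
  rewrite ln_1 in Hhead.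
  assert (Hxlnx : a * ln a <= 0) by (pose proof (ln_nonpos a ltac:(lra)); nra).
  assert (a * ln a * (1 - a / 2 + a ^ 2 / 6) <= 0).
  { assert (0 <= 1 - a / 2 + a ^ 2 / 6) by nra. nra. }
  nra.
Qed.

Lemma RInt_root4_ln_exp_le (a b : R) : 0 < a < 1 / 400 -> 1 < b ->
  RInt (fun t => Rpower t (1 / 4) * ln t * exp (- t)) a b <= - (1 / 50).
Proof.
  intros Ha Hb.
  set (f := fun t => Rpower t (1 / 4) * ln t * exp (- t)).
  assert (Hc : forall t, 0 < t -> continuous f t)
    by (intros t Ht; unfold f, Rpower; continuity_by_derive).
  rewrite (RInt_Chasles_pos f a 1 b) by (auto; lra).
  (* [int_1^oo (t - 1) e^-t dt = 1/e <= 3/8] and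
     [int_0^1 t^(1/4) ln t (1 - t) dt = -16/25 + 16/81] *)
  assert (Htail : RInt f 1 b <= 3 / 8).
  { apply Rle_trans with (RInt (fun t => (t - 1) * exp (- t)) 1 b).
    { apply RInt_le; [lra | apply ex_RInt_pos; auto; lra | |].
      - apply ex_RInt_pos; [|lra..]. intros t Ht. continuity_by_derive.
      - intros t Ht. unfold f. apply Rmult_le_compat_r; [apply Rlt_le, exp_pos|].
        apply Rpower_quarter_ln_le. lra. }
    rewrite (RInt_antiderivative (fun t => - t * exp (- t)));
      [| lra | intros t Ht; auto_derive; [exact I | ring] | intros t Ht; continuity_by_derive].
    rewrite (exp_Ropp 1). pose proof inv_exp_1_le. pose proof (exp_pos (- b)). nra. }
  assert (Hhead : RInt f a 1 <= - (16 / 25) + 16 / 81 + 4 * a).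
  { apply Rle_trans with (RInt (fun t => Rpower t (1 / 4) * ln t * (1 - t)) a 1).
    { apply RInt_le; [lra | apply ex_RInt_pos; auto; lra | |].
      - apply ex_RInt_pos; [|lra..]. intros t Ht. unfold Rpower. continuity_by_derive.
      - intros t Ht. unfold f. pose proof (ln_nonpos t ltac:(lra)).
        pose proof (Rpower_pos t (1 / 4)). pose proof (exp_ineq1_le (- t)).
        assert (Rpower t (1 / 4) * ln t <= 0) by nra. nra. }
    rewrite (RInt_antiderivative
               (fun t => t * Rpower t (1 / 4) * (4 / 5 * ln t - 16 / 25)
                         - t ^ 2 * Rpower t (1 / 4) * (4 / 9 * ln t - 16 / 81)));
      [| lra | intros t Ht; unfold Rpower; auto_derive; [lra | field; lra]
       | intros t Ht; unfold Rpower; continuity_by_derive].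
    rewrite Rpower_1_l, ln_1.
    pose proof (Rpower_quarter_neg_ln_le a (proj1 Ha)).
    pose proof (ln_nonpos a ltac:(lra)). pose proof (Rpower_pos a (1 / 4)).
    assert (Rpower a (1 / 4) <= 1) by (apply Rpower_le_1; lra).
    assert (a ^ 2 * Rpower a (1 / 4) * (4 / 9 * ln a - 16 / 81) <= 0).
    { assert (0 < a ^ 2 * Rpower a (1 / 4)) by (apply Rmult_lt_0_compat; nra). nra. }
    nra. }
  lra.
Qed.

Lemma Gamma_integrand_increment_bounds (x h t : R) : 0 <= x -> 0 <= h -> x + h <= 1 / 4 -> 0 < t ->
  h * (ln t * exp (- t)) <= Gamma_integrand (x + h + 1) t - Gamma_integrand (x + 1) t
  <= h * (Rpower t (1 / 4) * ln t * exp (- t)).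
Proof.
  intros Hx Hh Hxh Ht.
  rewrite !Gamma_integrand_succ, Rpower_plus.
  pose proof (exp_pos (- t)). pose proof (Rpower_pos t x). pose proof (Rpower_pos t h).
  assert (Hlo : h * ln t <= Rpower t x * (Rpower t h - 1)).
  { pose proof (Rpower_sub_1_ge t h).
    pose proof (Rpower_mul_ln_le t 0 x Hx) as Hmono. rewrite Rpower_O in Hmono by exact Ht.
    nra. }
  assert (Hhi : Rpower t x * (Rpower t h - 1) <= h * (Rpower t (1 / 4) * ln t)).
  { pose proof (Rpower_sub_1_le t h).
    pose proof (Rpower_mul_ln_le t (x + h) (1 / 4) Hxh) as Hmono. rewrite Rpower_plus in Hmono.
    nra. }
  split; nra.
Qed.

Lemma Gamma_increment_bounds (x h : R) : 0 <= x -> 0 < h -> x + h <= 1 / 4 ->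
  - (29 / 36) * h <= Gamma (x + h + 1) - Gamma (x + 1) <= - (1 / 50) * h.
Proof.
  intros Hx Hh Hxh.
  set (g := fun t => Gamma_integrand (x + h + 1) t - Gamma_integrand (x + 1) t).
  assert (Hg : is_RInt_gen g (at_right 0) (Rbar_locally p_infty)
                 (Gamma (x + h + 1) - Gamma (x + 1))).
  { exact (is_RInt_gen_minus (Fa := at_right 0) (Fb := Rbar_locally p_infty) _ _ _ _
             (is_RInt_gen_Gamma (x + h + 1) ltac:(lra)) (is_RInt_gen_Gamma (x + 1) ltac:(lra))). }
  assert (Hgc : forall t, 0 < t -> continuous g t).
  { intros t Ht. unfold g, Gamma_integrand, Rpower. continuity_by_derive. }
  split.
  - apply (is_RInt_gen_ge_eventually g _ _ Hg).
    apply (eventually_near_0_pinfty _ (1 / 2) 1); [lra|]. intros a b Ha Hb. simpl.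
    assert (Hex : ex_RInt (fun t => ln t * exp (- t)) a b)
      by (apply ex_RInt_pos; [intros t Ht; continuity_by_derive | lra..]).
    pose proof (RInt_ln_exp_ge a b ltac:(lra) Hb).
    apply Rle_trans with (RInt (fun t => h * (ln t * exp (- t))) a b).
    + rewrite RInt_scal_R by exact Hex. nra.
    + apply RInt_le; [lra | apply ex_RInt_pos; [intros t Ht; continuity_by_derive | lra..]
                   | apply ex_RInt_pos; auto; lra |].
      intros t Ht. apply Gamma_integrand_increment_bounds; lra.
  - apply (is_RInt_gen_le_eventually g _ _ Hg).
    apply (eventually_near_0_pinfty _ (1 / 400) 1); [lra|]. intros a b Ha Hb. simpl.
    assert (Hex : ex_RInt (fun t => Rpower t (1 / 4) * ln t * exp (- t)) a b)
      by (apply ex_RInt_pos; [intros t Ht; unfold Rpower; continuity_by_derive | lra..]).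
    pose proof (RInt_root4_ln_exp_le a b Ha Hb).
    apply Rle_trans with (RInt (fun t => h * (Rpower t (1 / 4) * ln t * exp (- t))) a b).
    + apply RInt_le; [lra | apply ex_RInt_pos; auto; lra | |].
      { apply ex_RInt_pos; [|lra..]. intros t Ht. unfold Rpower. continuity_by_derive. }
      intros t Ht. apply Gamma_integrand_increment_bounds; lra.
    + rewrite RInt_scal_R by exact Hex. nra.
Qed.

Lemma Gamma_succ_ge (x : R) : 0 < x <= 1 / 5 -> 29 / 36 <= Gamma (x + 1).
Proof.
  intros Hx.
  pose proof (Gamma_increment_bounds 0 x ltac:(lra) ltac:(lra) ltac:(lra)) as Hinc.
  rewrite !Rplus_0_l in Hinc. pose proof Gamma_1_ge. lra.
Qed.

Lemma Gamma_difference_quotient (x h : R) : 0 < x -> 0 < h ->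
  (Gamma (x + h) - Gamma x) / h
  = (x * ((Gamma (x + h + 1) - Gamma (x + 1)) / h) - Gamma (x + 1)) / (x * (x + h)).
Proof.
  intros Hx Hh. rewrite (Gamma_succ (x + h)), (Gamma_succ x) by lra. field. lra.
Qed.

Lemma Gamma_difference_quotient_bounds (x h : R) : 0 < x -> 0 < h -> x + h <= 1 / 4 ->
  - (Gamma (x + 1) + 29 / 36 * x) / x ^ 2 <= (Gamma (x + h) - Gamma x) / h
  <= - (Gamma (x + 1) + x / 50) / (x * (x + h)).
Proof.
  intros Hx Hh Hxh.
  rewrite Gamma_difference_quotient by assumption.
  set (G := Gamma (x + 1)).
  assert (HG : 0 <= G) by (apply Gamma_ge_0; lra).
  set (c := (Gamma (x + h + 1) - G) / h).
  assert (Hc : - (29 / 36) <= c <= - (1 / 50)).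
  { pose proof (Gamma_increment_bounds x h ltac:(lra) Hh Hxh) as Hinc. fold G in Hinc.
    replace (Gamma (x + h + 1) - G) with (c * h) in Hinc by (unfold c; field; lra).
    split; nra. }
  split.
  - assert (E : (x * c - G) / (x * (x + h)) + (G + 29 / 36 * x) / x ^ 2
                = (x ^ 2 * (c + 29 / 36) + h * (G + 29 / 36 * x)) / (x ^ 2 * (x + h)))
      by (field; lra).
    assert (0 <= (x ^ 2 * (c + 29 / 36) + h * (G + 29 / 36 * x)) / (x ^ 2 * (x + h))).
    { apply Rdiv_le_0_compat; [|apply Rmult_lt_0_compat; nra].
      apply Rplus_le_le_0_compat; apply Rmult_le_pos; nra. }
    unfold Rdiv in *. lra.
  - unfold Rdiv. apply Rmult_le_compat_r; [apply Rlt_le, Rinv_0_lt_compat; nra | nra].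
Qed.

Lemma Derive_Gamma_bounds (x : R) : 0 < x <= 1 / 5 ->
  - (29 / 36) * x <= x ^ 2 * Derive Gamma x + Gamma (x + 1) < 0.
Proof.
  intros Hx. set (G := Gamma (x + 1)).
  assert (HG : 29 / 36 <= G) by (apply Gamma_succ_ge; exact Hx).
  (* [h0] is chosen so that [G h0 = x^2/100 < x^2/50]: this makes the upper bound strict *)
  set (h0 := x ^ 2 / (100 * G)).
  assert (Hh0 : 0 < h0) by (apply Rdiv_lt_0_compat; nra).
  assert (Hh0x : h0 <= x / 20) by (unfold h0; apply Rle_div_l; nra).
  set (U := - (G + x / 50) / (x * (x + h0))).
  assert (HD : - (G + 29 / 36 * x) / x ^ 2 <= Derive Gamma x <= U).
  { apply (Derive_between Gamma x h0 _ _ Hh0). intros h Hh.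
    pose proof (Gamma_difference_quotient_bounds x h ltac:(lra) ltac:(lra) ltac:(lra)) as Hq.
    fold G in Hq. split; [lra|].
    apply Rle_trans with (1 := proj2 Hq). unfold U, Rdiv.
    apply Rmult_le_compat_neg_l; [lra | apply Rinv_le_contravar; nra]. }
  assert (HxU : x ^ 2 * U + G = (G * h0 - x ^ 2 / 50) / (x + h0)) by (unfold U; field; lra).
  assert (HGh0 : G * h0 = x ^ 2 / 100) by (unfold h0; field; lra).
  assert (x ^ 2 * U + G < 0).
  { rewrite HxU, HGh0.
    assert (0 < x ^ 2 / (x + h0)) by (apply Rdiv_lt_0_compat; nra).
    replace ((x ^ 2 / 100 - x ^ 2 / 50) / (x + h0)) with (- (x ^ 2 / (x + h0)) / 100)
      by (field; lra).
    lra. }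
  assert (x ^ 2 * (- (G + 29 / 36 * x) / x ^ 2) = - (G + 29 / 36 * x)) by (field; lra).
  assert (x ^ 2 * (- (G + 29 / 36 * x) / x ^ 2) <= x ^ 2 * Derive Gamma x)
    by (apply Rmult_le_compat_l; nra).
  assert (x ^ 2 * Derive Gamma x <= x ^ 2 * U) by (apply Rmult_le_compat_l; nra).
  lra.
Qed.

Lemma digamma_bounds (x : R) : 0 < x <= 1 / 5 -> -1 <= digamma x + / x < 0.
Proof.
  intros Hx. set (G := Gamma (x + 1)).
  pose proof (Gamma_succ_ge x Hx) as HG. fold G in HG.
  pose proof (Derive_Gamma_bounds x Hx) as HD. fold G in HD.
  assert (E : digamma x + / x = (x ^ 2 * Derive Gamma x + G) / (x * G)).
  { unfold digamma.
    replace (Gamma x) with (G / x) by (unfold G; rewrite Gamma_succ by lra; field; lra).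
    field. lra. }
  assert (HxG : 0 < / (x * G)) by (apply Rinv_0_lt_compat; nra).
  rewrite E. unfold Rdiv. split; [|nra].
  apply (Rmult_le_reg_r (x * G)); [nra|].
  rewrite Rmult_assoc, Rinv_l, Rmult_1_r by nra. nra.
Qed.

(** * The Euler-Mascheroni constant *)

Definition harmonic_sub_ln (n : nat) : R := harmonic n - ln (INR n).

Lemma harmonic_S (n : nat) : harmonic (S n) = harmonic n + / INR (S n).
Proof. unfold harmonic. rewrite sum_n_Sm by lia. reflexivity. Qed.

Lemma harmonic_sub_ln_S (n : nat) : (1 <= n)%nat ->
  harmonic_sub_ln (S n) = harmonic_sub_ln n + / (INR n + 1) - ln ((INR n + 1) / INR n).
Proof.
  intros Hn. assert (1 <= INR n) by (apply (le_INR 1); exact Hn).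
  unfold harmonic_sub_ln. rewrite harmonic_S, S_INR, ln_div by lra. ring.
Qed.

Lemma harmonic_sub_ln_S_le (n : nat) : (1 <= n)%nat -> harmonic_sub_ln (S n) <= harmonic_sub_ln n.
Proof.
  intros Hn. assert (1 <= INR n) by (apply (le_INR 1); exact Hn).
  rewrite harmonic_sub_ln_S by exact Hn.
  pose proof (ln_ge_1_sub_inv ((INR n + 1) / INR n) ltac:(apply Rdiv_lt_0_compat; lra)).
  replace (1 - / ((INR n + 1) / INR n)) with (/ (INR n + 1)) in * by (field; lra).
  lra.
Qed.

Lemma harmonic_sub_ln_S_ge (n : nat) : (1 <= n)%nat ->
  harmonic_sub_ln n - / (2 * INR n) <= harmonic_sub_ln (S n) - / (2 * INR (S n)).
Proof.
  intros Hn. assert (1 <= INR n) by (apply (le_INR 1); exact Hn).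
  rewrite harmonic_sub_ln_S, S_INR by exact Hn.
  assert (1 <= (INR n + 1) / INR n) by (apply Rle_div_r; lra).
  pose proof (ln_le_half_sub_inv ((INR n + 1) / INR n) ltac:(assumption)).
  replace (((INR n + 1) / INR n - / ((INR n + 1) / INR n)) / 2)
    with (/ (2 * INR n) + / (2 * (INR n + 1))) in * by (field; lra).
  replace (/ (INR n + 1)) with (/ (2 * (INR n + 1)) + / (2 * (INR n + 1))) by (field; lra).
  lra.
Qed.

Lemma harmonic_sub_ln_between (n k : nat) : (1 <= n)%nat ->
  harmonic_sub_ln n - / (2 * INR n) <= harmonic_sub_ln (n + k) <= harmonic_sub_ln n.
Proof.
  intros Hn.
  assert (Hind : harmonic_sub_ln n - / (2 * INR n) <= harmonic_sub_ln (n + k) - / (2 * INR (n + k))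
                 /\ harmonic_sub_ln (n + k) <= harmonic_sub_ln n).
  { induction k as [|k IH].
    - rewrite Nat.add_0_r. lra.
    - rewrite Nat.add_succ_r.
      pose proof (harmonic_sub_ln_S_le (n + k) ltac:(lia)).
      pose proof (harmonic_sub_ln_S_ge (n + k) ltac:(lia)). lra. }
  assert (0 < / (2 * INR (n + k))).
  { apply Rinv_0_lt_compat. pose proof (le_INR 1 (n + k) ltac:(lia)). simpl in *. lra. }
  lra.
Qed.

Lemma euler_gamma_between (n : nat) : (1 <= n)%nat ->
  harmonic_sub_ln n - / (2 * INR n) <= euler_gamma <= harmonic_sub_ln n.
Proof.
  intros Hn. apply real_Lim_seq_between. exists n. intros m Hm.
  replace m with (n + (m - n))%nat by lia. apply harmonic_sub_ln_between. exact Hn.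
Qed.

Theorem lemma7p4 (p : nat) (Hp : prime (Z.of_nat p)) (H5 : (5 <= p)%nat) :
  (INR p - 1) * (1 - euler_gamma) - ln 2 - 1 < varpi p /\
  varpi p < (INR p - 1) * (1 - euler_gamma).
Proof.
  clear Hp.
  set (P := INR p).
  assert (HP : 5 <= P).
  { unfold P. replace 5 with (INR 5) by (simpl; lra). apply le_INR. exact H5. }
  assert (Hx : 0 < / P <= 1 / 5).
  { split; [apply Rinv_0_lt_compat; lra|].
    unfold Rdiv. rewrite Rmult_1_l. apply Rinv_le_contravar; lra. }
  pose proof (digamma_bounds (/ P) Hx) as Hpsi. rewrite Rinv_inv in Hpsi.
  pose proof (euler_gamma_between p ltac:(lia)) as Hgamma. fold P in Hgamma.
  assert (Hgap : 0 <= P * (harmonic_sub_ln p - euler_gamma) <= 1 / 2).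
  { split; [nra|].
    replace (1 / 2) with (P * / (2 * P)) by (field; lra). apply Rmult_le_compat_l; lra. }
  pose proof ln_lt_2.
  assert (Hvarpi : varpi p = (digamma (/ P) + P) + P - 1 + euler_gamma - P * harmonic_sub_ln p)
    by (unfold varpi, harmonic_sub_ln; fold P; ring).
  rewrite Hvarpi. split; nra.
Qed.
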